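(* Let $X_1\in\mathbb{B}^2\setminus\{0\}$ and $c=\rho_{\mathbb{B}^2}(0,X_1)$. Let $M_0$ be one of the two points of $L_{0X_1}(0)\cap S^1$. For $k\ge1$, given $X_1,\dots,X_k$ on the line $L(0,X_1)$, let $M_k$ be the point of $L_{0X_1}(X_k)\cap S^1$ lying on the same side of $L(0,X_1)$ as $M_0$, let $N_{k+1}$ be the intersection point of the line $L(M_{k-1},X_k)$ with $S^1$ other than $M_{k-1}$, and let $X_{k+1}=L_{0X_1}(N_{k+1})\cap L(0,X_1)$. Then all $X_k$ lie on the radius of $\mathbb{B}^2$ through $X_1$ and $\rho_{\mathbb{B}^2}(0,X_k)=kc$ for every $k\ge1$.
   Context: $\mathbb{B}^2$ is the unit disk, $S^1$ the unit circle, $\rho_{\mathbb{B}^2}$ the hyperbolic distance given by $\sinh\frac{\rho_{\mathbb{B}^2}(x,y)}{2}=\frac{|x-y|}{\sqrt{1-|x|^2}\sqrt{1-|y|^2}}$. $L(p,q)$ is the line through $p,q$, and $L_{0X_1}(p)$ is the line through $p$ orthogonal to $L(0,X_1)$. *)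

From Stdlib Require Import Reals.
Open Scope R_scope.

Definition pt : Type := (R * R)%type.
Definition origin : pt := (0, 0).
Definition dot (p q : pt) : R := fst p * fst q + snd p * snd q.
Definition norm (p : pt) : R := sqrt (dot p p).
Definition det (p q : pt) : R := fst p * snd q - snd p * fst q.
Definition psub (p q : pt) : pt := (fst p - fst q, snd p - snd q).
Definition pscale (s : R) (p : pt) : pt := (s * fst p, s * snd p).

Definition on_circle (p : pt) : Prop := norm p = 1.
Definition in_disk (p : pt) : Prop := norm p < 1.

Definition arsinh (t : R) : R := ln (t + sqrt (t ^ 2 + 1)).

Definition hdist (x y : pt) : R :=
  2 * arsinh (norm (psub x y) / (sqrt (1 - norm x ^ 2) * sqrt (1 - norm y ^ 2))).

(* z lies on the line L(p,q) through p and q (p <> q) *)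
Definition on_line (p q z : pt) : Prop := det (psub q p) (psub z p) = 0.

(* z lies on L_{0X1}(p): the line through p orthogonal to L(0,X1) *)
Definition on_perp (X1 p z : pt) : Prop := dot (psub z p) X1 = 0.

Definition same_side (X1 a b : pt) : Prop := det X1 a * det X1 b > 0.

(** Measure positions along the diameter through [X 1] by the signed
    coordinate [t] and put [hratio t = (1 + t) / (1 - t)], which is the
    exponential of the hyperbolic distance from the origin.  If a chord [M N]
    of the unit circle crosses the diameter at [x], the projections [m], [n]
    of [M], [N] onto the diameter satisfy [hratio m * hratio n = hratio x ^ 2]:
    the crossing point is the hyperbolic midpoint of the two projections.
    Since [M 0] projects to [0] while [M k] and [N (S k)] project to [X k] and
    [X (S k)], the values [hratio (X k)] form a geometric sequence of ratio
    [hratio (X 1)], that is [rho (0, X k) = k * rho (0, X 1)]. *)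

From Stdlib Require Import Reals Lra Lia.
Open Scope R_scope.

Definition hratio (t : R) : R := (1 + t) / (1 - t).

Definition unit_dir (w : pt) : pt := pscale (/ norm w) w.

Lemma dot_pscale (s t : R) (p q : pt) : dot (pscale s p) (pscale t q) = s * t * dot p q.
Proof. unfold dot, pscale; simpl; ring. Qed.

Lemma dot_pscale_r (s : R) (p q : pt) : dot p (pscale s q) = s * dot p q.
Proof. unfold dot, pscale; simpl; ring. Qed.

Lemma pscale_pscale (s t : R) (p : pt) : pscale s (pscale t p) = pscale (s * t) p.
Proof. unfold pscale; simpl; f_equal; ring. Qed.

Lemma psub_origin_r (p : pt) : psub p origin = p.
Proof. destruct p; unfold psub, origin; simpl; f_equal; ring. Qed.

Lemma dot_self_norm (p : pt) : dot p p = norm p ^ 2.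
Proof. unfold norm, dot; rewrite pow2_sqrt; nra. Qed.

Lemma norm_pos (p : pt) : p <> origin -> 0 < norm p.
Proof.
  intros Hp; apply sqrt_lt_R0; destruct p as [p1 p2]; unfold dot; simpl.
  destruct (Req_dec p1 0) as [-> | H1]; destruct (Req_dec p2 0) as [-> | H2];
    try nra; now contradict Hp.
Qed.

Lemma on_circle_dot (p : pt) : on_circle p -> dot p p = 1.
Proof. intros Hp; rewrite dot_self_norm, Hp; ring. Qed.

Lemma norm_pscale_unit (s : R) (u : pt) : dot u u = 1 -> norm (pscale s u) = Rabs s.
Proof.
  intros Hu; unfold norm.
  now rewrite dot_pscale, Hu, Rmult_1_r, <- sqrt_Rsqr_abs.
Qed.

Lemma on_perp_dot (w p q : pt) : on_perp w p q -> dot q w = dot p w.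
Proof. unfold on_perp, dot, psub; simpl; lra. Qed.

Lemma unit_dir_unit (w : pt) : w <> origin -> dot (unit_dir w) (unit_dir w) = 1.
Proof.
  intros Hw; pose proof (norm_pos w Hw).
  unfold unit_dir; rewrite dot_pscale, dot_self_norm; field; lra.
Qed.

Lemma pt_frame (u p : pt) :
  dot u u = 1 ->
  p = (dot p u * fst u - det u p * snd u, dot p u * snd u + det u p * fst u).
Proof.
  destruct u as [u1 u2], p as [p1 p2]; unfold dot, det; simpl; intros Hu.
  f_equal; [transitivity (p1 * (u1 * u1 + u2 * u2)) | transitivity (p2 * (u1 * u1 + u2 * u2))];
    solve [rewrite Hu; ring | ring].
Qed.

Lemma pt_frame_inj (u p q : pt) :
  dot u u = 1 -> dot p u = dot q u -> det u p = det u q -> p = q.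
Proof.
  intros Hu Hd Hdet; rewrite (pt_frame u p), (pt_frame u q), Hd, Hdet; easy.
Qed.

Lemma det_zero_pscale (u p : pt) : dot u u = 1 -> det u p = 0 -> p = pscale (dot p u) u.
Proof.
  intros Hu Hdet; rewrite (pt_frame u p) at 1 by exact Hu.
  rewrite Hdet; unfold pscale; f_equal; ring.
Qed.

Lemma dot_sq_add_det_sq (u p : pt) : dot p u ^ 2 + det u p ^ 2 = dot p p * dot u u.
Proof. unfold dot, det; ring. Qed.

(** The chord identity, in the frame of the diameter: [M = (m, mu)] and
    [N = (n, nu)] lie on the unit circle and their chord passes through
    [(x, 0)]. *)

Lemma chord_axis_coords (m mu n nu x : R) :
  m ^ 2 + mu ^ 2 = 1 -> n ^ 2 + nu ^ 2 = 1 -> (m, mu) <> (n, nu) ->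
  nu * (x - m) + mu * (n - x) = 0 ->
  (1 + m) * (1 + n) * (1 - x) ^ 2 = (1 - m) * (1 - n) * (1 + x) ^ 2.
Proof.
  intros Hm Hn Hne Hcol.
  set (E := (m + n) * (1 + x ^ 2) - 2 * x * (1 + m * n)).
  enough (HE : E = 0) by (unfold E in HE; nra).
  destruct (Req_dec n m) as [-> | Hnm].
  - (* the chord is perpendicular to the diameter, so it crosses it at [x = m] *)
    assert (Hnu : nu <> mu) by (intros ->; now apply Hne).
    assert (Hx : (nu - mu) * (x - m) = 0) by lra.
    apply Rmult_integral in Hx as [Hx | Hx]; [now contradict Hnu; lra |].
    unfold E; replace x with m by lra; ring.
  - apply (Rmult_eq_reg_l (n - m)); [| lra].
    transitivity ((nu * (x - m) + mu * (n - x)) * (mu * (n - x) - nu * (x - m))).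
    + replace ((nu * (x - m) + mu * (n - x)) * (mu * (n - x) - nu * (x - m)))
        with (mu ^ 2 * (n - x) ^ 2 - nu ^ 2 * (x - m) ^ 2) by ring.
      replace (mu ^ 2) with (1 - m ^ 2) by lra.
      replace (nu ^ 2) with (1 - n ^ 2) by lra.
      unfold E; ring.
    + rewrite Hcol; ring.
Qed.

Lemma chord_axis (u M N : pt) (x : R) :
  dot u u = 1 -> on_circle M -> on_circle N -> M <> N ->
  on_line M (pscale x u) N ->
  (1 + dot M u) * (1 + dot N u) * (1 - x) ^ 2
  = (1 - dot M u) * (1 - dot N u) * (1 + x) ^ 2.
Proof.
  intros Hu HM HN Hne Hline.
  apply (chord_axis_coords _ (det u M) _ (det u N)).
  - now rewrite dot_sq_add_det_sq, on_circle_dot, Hu, Rmult_1_r.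
  - now rewrite dot_sq_add_det_sq, on_circle_dot, Hu, Rmult_1_r.
  - intros [= Hd Hdet]; now apply Hne, (pt_frame_inj u).
  - assert (Hframe : det u N * (x * dot u u - dot M u) + det u M * (dot N u - x * dot u u)
                     = det (psub (pscale x u) M) (psub N M) * dot u u)
      by (unfold dot, det, psub, pscale; simpl; ring).
    unfold on_line in Hline; rewrite Hline, Hu in Hframe; lra.
Qed.

Lemma hratio_0 : hratio 0 = 1.
Proof. unfold hratio; field. Qed.

Lemma hratio_ge_1 (t : R) : 0 <= t < 1 -> 1 <= hratio t.
Proof.
  unfold hratio; intros Ht.
  apply (Rmult_le_reg_r (1 - t)); [lra |].
  unfold Rdiv; rewrite Rmult_assoc, Rinv_l; lra.
Qed.

Lemma nonneg_of_hratio_ge_1 (t : R) : -1 < t < 1 -> 1 <= hratio t -> 0 <= t.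
Proof.
  unfold hratio; intros Ht Hr.
  apply (Rmult_le_compat_r (1 - t)) in Hr; [| lra].
  unfold Rdiv in Hr; rewrite Rmult_assoc, Rinv_l in Hr; lra.
Qed.

Lemma chord_hratio (m n x : R) :
  -1 < m < 1 -> -1 < x < 1 ->
  (1 + m) * (1 + n) * (1 - x) ^ 2 = (1 - m) * (1 - n) * (1 + x) ^ 2 ->
  -1 < n < 1 /\ hratio m * hratio n = hratio x ^ 2.
Proof.
  intros Hm Hx Hchord.
  set (P := (1 + m) * (1 - x) ^ 2); set (Q := (1 - m) * (1 + x) ^ 2).
  assert (HP : 0 < P) by (unfold P; apply Rmult_lt_0_compat; nra).
  assert (HQ : 0 < Q) by (unfold Q; apply Rmult_lt_0_compat; nra).
  assert (Hn : n * (P + Q) = Q - P) by (unfold P, Q; nra).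
  assert (Hn1 : -1 < n < 1) by (split; nra).
  split; [exact Hn1 |].
  unfold hratio; field_simplify_eq; [lra | repeat split; apply Rgt_not_eq; lra].
Qed.

Lemma two_arsinh_hratio (s : R) :
  -1 < s < 1 -> 2 * arsinh (s / sqrt (1 - s ^ 2)) = ln (hratio s).
Proof.
  intros Hs; set (r := sqrt (1 - s ^ 2)).
  assert (Hr : 0 < r) by (apply sqrt_lt_R0; nra).
  assert (Hr0 : r <> 0) by (apply Rgt_not_eq; exact Hr).
  assert (Hrr : r ^ 2 = 1 - s ^ 2) by (apply pow2_sqrt; nra).
  assert (Hsq : (s / r) ^ 2 + 1 = (1 / r) ^ 2) by (field_simplify_eq; [lra | exact Hr0]).
  unfold arsinh; rewrite Hsq, sqrt_pow2 by (left; apply Rdiv_lt_0_compat; lra).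
  replace (s / r + 1 / r) with ((1 + s) / r) by (field; exact Hr0).
  assert (Hpos : 0 < (1 + s) / r) by (apply Rdiv_lt_0_compat; lra).
  replace 2 with (INR 2) by (simpl; ring).
  rewrite <- ln_pow by exact Hpos; f_equal.
  unfold hratio; field_simplify_eq; [nra | split; [apply Rgt_not_eq; lra | exact Hr0]].
Qed.

Lemma hdist_origin (p : pt) : in_disk p -> hdist origin p = ln (hratio (norm p)).
Proof.
  intros Hp.
  assert (Hsub : norm (psub origin p) = norm p)
    by (unfold norm, dot, psub, origin; simpl; f_equal; ring).
  assert (H0 : norm origin = 0)
    by (unfold norm, dot, origin; simpl; rewrite Rmult_0_l, Rplus_0_l; exact sqrt_0).
  assert (Hn : 0 <= norm p) by apply sqrt_pos.
  unfold hdist; rewrite Hsub, H0.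
  replace (1 - 0 ^ 2) with 1 by ring.
  rewrite sqrt_1, Rmult_1_l; apply two_arsinh_hratio; unfold in_disk in Hp; lra.
Qed.

Section Construction.

Variables X M N : nat -> pt.

Hypothesis HX1_disk : in_disk (X 1%nat).
Hypothesis HX1_nz : X 1%nat <> origin.
Hypothesis HM0_circle : on_circle (M 0%nat).
Hypothesis HM0_perp : on_perp (X 1%nat) origin (M 0%nat).
Hypothesis HM : forall k : nat, (1 <= k)%nat ->
  on_circle (M k) /\ on_perp (X 1%nat) (X k) (M k)
  /\ same_side (X 1%nat) (M k) (M 0%nat).
Hypothesis HN : forall k : nat, (1 <= k)%nat ->
  on_circle (N (S k)) /\ N (S k) <> M (k - 1)%nat
  /\ on_line (M (k - 1)%nat) (X k) (N (S k)).
Hypothesis HX : forall k : nat, (1 <= k)%nat ->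
  on_line origin (X 1%nat) (X (S k)) /\ on_perp (X 1%nat) (N (S k)) (X (S k)).

Let a := norm (X 1%nat).
Let u := unit_dir (X 1%nat).

Lemma unit_u : dot u u = 1.
Proof. exact (unit_dir_unit _ HX1_nz). Qed.

Lemma dot_M_X (k : nat) : (1 <= k)%nat -> dot (M k) u = dot (X k) u.
Proof.
  intros Hk; unfold u, unit_dir; rewrite !dot_pscale_r.
  destruct (HM k Hk) as [_ [Hperp _]]; now rewrite (on_perp_dot _ _ _ Hperp).
Qed.

Lemma dot_N_X (k : nat) : (1 <= k)%nat -> dot (N (S k)) u = dot (X (S k)) u.
Proof.
  intros Hk; unfold u, unit_dir; rewrite !dot_pscale_r.
  destruct (HX k Hk) as [_ Hperp]; now rewrite (on_perp_dot _ _ _ Hperp).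
Qed.

Lemma X_on_axis (k : nat) : (1 <= k)%nat -> X k = pscale (dot (M k) u) u.
Proof.
  intros Hk; rewrite dot_M_X by exact Hk; apply det_zero_pscale; [exact unit_u |].
  unfold u, unit_dir.
  replace (det (pscale (/ norm (X 1%nat)) (X 1%nat)) (X k))
    with (/ norm (X 1%nat) * det (X 1%nat) (X k)) by (unfold det, pscale; simpl; ring).
  destruct k as [| [| k]]; [lia | unfold det; ring |].
  destruct (HX (S k) ltac:(lia)) as [Hline _].
  unfold on_line in Hline; rewrite !psub_origin_r in Hline.
  rewrite Hline; ring.
Qed.

Lemma dot_M0 : dot (M 0%nat) u = 0.
Proof.
  unfold u, unit_dir; rewrite dot_pscale_r.
  unfold on_perp, psub, origin in HM0_perp; rewrite <- (Rmult_0_r (/ a)).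
  f_equal; unfold dot in *; simpl in *; lra.
Qed.

Lemma dot_M1 : dot (M 1%nat) u = a.
Proof.
  rewrite dot_M_X by lia; unfold u, unit_dir; rewrite dot_pscale_r, dot_self_norm.
  unfold a; field; apply Rgt_not_eq, norm_pos, HX1_nz.
Qed.

Lemma M_on_circle (k : nat) : on_circle (M k).
Proof. destruct k; [exact HM0_circle | now apply HM; lia]. Qed.

Lemma hratio_chord_M (k : nat) :
  -1 < dot (M k) u < 1 -> -1 < dot (M (S k)) u < 1 ->
  -1 < dot (M (S (S k))) u < 1
  /\ hratio (dot (M k) u) * hratio (dot (M (S (S k))) u) = hratio (dot (M (S k)) u) ^ 2.
Proof.
  intros Hk HSk.
  destruct (HN (S k) ltac:(lia)) as [HNc [HNne HNline]].
  replace (S k - 1)%nat with k in * by lia.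
  rewrite X_on_axis in HNline by lia.
  rewrite (dot_M_X (S (S k))), <- dot_N_X by lia.
  apply chord_hratio; [exact Hk | exact HSk |].
  apply chord_axis; auto using unit_u, M_on_circle.
Qed.

Lemma hratio_M (k : nat) :
  -1 < dot (M k) u < 1 /\ hratio (dot (M k) u) = hratio a ^ k.
Proof.
  assert (Ha : 0 < a < 1) by (split; [exact (norm_pos _ HX1_nz) | exact HX1_disk]).
  assert (Hra : 0 < hratio a) by (unfold hratio; apply Rdiv_lt_0_compat; lra).
  enough (Hpair : forall k, (-1 < dot (M k) u < 1 /\ hratio (dot (M k) u) = hratio a ^ k)
                  /\ (-1 < dot (M (S k)) u < 1 /\ hratio (dot (M (S k)) u) = hratio a ^ S k))
    by apply Hpair.
  clear k; intros k; induction k as [| k [[Hk Hrk] [HSk HrSk]]].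
  - rewrite dot_M0, dot_M1, hratio_0; repeat split; lra.
  - split; [easy |].
    destruct (hratio_chord_M k Hk HSk) as [HSSk Hrec]; split; [exact HSSk |].
    rewrite Hrk, HrSk in Hrec.
    apply (Rmult_eq_reg_l (hratio a ^ k)); [| apply pow_nonzero; lra].
    rewrite Hrec; simpl; ring.
Qed.

End Construction.

Theorem corollary4p4 (X M N : nat -> pt) :
  in_disk (X 1%nat) -> X 1%nat <> origin ->
  on_circle (M 0%nat) -> on_perp (X 1%nat) origin (M 0%nat) ->
  (forall k : nat, (1 <= k)%nat ->
     on_circle (M k) /\ on_perp (X 1%nat) (X k) (M k)
     /\ same_side (X 1%nat) (M k) (M 0%nat)) ->
  (forall k : nat, (1 <= k)%nat ->
     on_circle (N (S k)) /\ N (S k) <> M (k - 1)%nat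
     /\ on_line (M (k - 1)%nat) (X k) (N (S k))) ->
  (forall k : nat, (1 <= k)%nat ->
     on_line origin (X 1%nat) (X (S k)) /\ on_perp (X 1%nat) (N (S k)) (X (S k))) ->
  forall k : nat, (1 <= k)%nat ->
    (exists s : R, 0 <= s < 1 /\ X k = pscale (s / norm (X 1%nat)) (X 1%nat))
    /\ hdist origin (X k) = INR k * hdist origin (X 1%nat).
Proof.
  intros Hdisk Hnz HM0c HM0p HM HN HX k Hk.
  set (u := unit_dir (X 1%nat)); set (t := dot (M k) u).
  assert (Hu : dot u u = 1) by exact (unit_dir_unit _ Hnz).
  assert (Hax : X k = pscale t u) by (eapply X_on_axis; eassumption).
  assert (Hrk : -1 < t < 1 /\ hratio t = hratio (norm (X 1%nat)) ^ k)
    by (eapply hratio_M; eassumption).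
  destruct Hrk as [Ht Hrt].
  assert (Hra : 1 <= hratio (norm (X 1%nat)))
    by (apply hratio_ge_1; split; [apply sqrt_pos | exact Hdisk]).
  assert (Ht0 : 0 <= t)
    by (apply nonneg_of_hratio_ge_1; [exact Ht | rewrite Hrt; now apply pow_R1_Rle]).
  assert (Hnorm : norm (X k) = t)
    by (rewrite Hax, norm_pscale_unit by exact Hu; now apply Rabs_pos_eq).
  split.
  - exists t; split; [lra |].
    rewrite Hax; unfold u, unit_dir; now rewrite pscale_pscale.
  - rewrite (hdist_origin (X k)), (hdist_origin (X 1%nat)), Hnorm, Hrt
      by (unfold in_disk in *; lra).
    apply ln_pow; lra.
Qed.
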